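(* For the deterministic system described in the context, the recurrence time $\zeta_n$ is finite for all sufficiently large $n$ and \[ \lim_{n\to\infty}\frac{\zeta_n}{\log n}=\frac{\min\{1-\beta,\alpha\}}{\lambda_1}. \]
   Context: Fix constants $r_0,d_0\ge 0$ with $\lambda_0:=r_0-d_0<0$, $d_1>0$, $k>1$, $\alpha\in(0,1)$, $\beta\in(0,1)$. Let $f:[0,\infty)^2\to[0,\infty)$ satisfy: (A1) $f$ is Lipschitz continuous; (A2) $f(x,y)=r_1$ when $x+y=0$ and $f(x,y)=d_1$ when $x+y=1$, where $r_1:=f(0,0)>d_1$; (A3) $f(x,y)=\Phi(x+y)$ for some non-increasing function $\Phi:[0,\infty)\to[0,\infty)$; (A4) $f(x,y)\to0$ as $x\to\infty$ and as $y\to\infty$; (A5) $f(x,y)\ge \lambda_1(1-(x+y))+d_1$ for all $x,y\ge0$, where $\lambda_1:=r_1-d_1>0$. Put $\phi(x,y):=f(x,y)-d_1$. For each integer $n\ge1$ let $K=K(n):=kn$ and let $(y_0,y_1,y_\beta)$ solve \[ \dot y_0=\lambda_0 y_0,\qquad \dot y_1=\phi(y_0,y_1)\,y_1+n^{-\alpha}y_0,\qquad \dot y_\beta=\phi(y_0,y_1)\,y_\beta, \] with $(y_0(0),y_1(0),y_\beta(0))=(n/K,\,n^\beta/K,\,n^\beta/K)$. Define the deterministic recurrence time $\zeta_n:=\inf\{t>0: y_1(t)=n/K\}$. *)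

From Stdlib Require Import Reals.
From Coquelicot Require Import Coquelicot.
Open Scope R_scope.

Definition lipschitz_on_quadrant (f : R -> R -> R) : Prop :=
  exists L : R, 0 <= L /\
    forall x y x' y', 0 <= x -> 0 <= y -> 0 <= x' -> 0 <= y' ->
      Rabs (f x y - f x' y') <= L * (Rabs (x - x') + Rabs (y - y')).

(* The standing assumptions (A1)-(A5) on f : [0,oo)^2 -> [0,oo),
   with r1 := f 0 0 and lambda1 := r1 - d1. *)
Definition f_assumptions (f : R -> R -> R) (d1 : R) : Prop :=
  (forall x y, 0 <= x -> 0 <= y -> 0 <= f x y) /\
  lipschitz_on_quadrant f /\
  (f 0 0 > d1 /\
            (forall x y, 0 <= x -> 0 <= y -> x + y = 0 -> f x y = f 0 0) /\
            (forall x y, 0 <= x -> 0 <= y -> x + y = 1 -> f x y = d1)) /\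
  (exists Phi : R -> R,
              (forall a b, 0 <= a -> a <= b -> Phi b <= Phi a) /\
              (forall a, 0 <= a -> 0 <= Phi a) /\
              (forall x y, 0 <= x -> 0 <= y -> f x y = Phi (x + y))) /\
  (forall y, 0 <= y -> is_lim (fun x => f x y) p_infty 0) /\
           (forall x, 0 <= x -> is_lim (fun y => f x y) p_infty 0) /\
  (* A5 *) (forall x y, 0 <= x -> 0 <= y ->
              f x y >= (f 0 0 - d1) * (1 - (x + y)) + d1).

Definition solves_system (f : R -> R -> R) (r0 d0 d1 k alpha beta : R) (n : nat)
    (y0 y1 yb : R -> R) : Prop :=
  let lambda0 := r0 - d0 in
  let phi := fun x y => f x y - d1 in
  let nr := INR n in
  let K := k * nr in
  (forall t, 0 < t -> is_derive y0 t (lambda0 * y0 t)) /\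
  (forall t, 0 < t -> is_derive y1 t (phi (y0 t) (y1 t) * y1 t
                                      + Rpower nr (- alpha) * y0 t)) /\
  (forall t, 0 < t -> is_derive yb t (phi (y0 t) (y1 t) * yb t)) /\
  filterlim y0 (at_right 0) (locally (y0 0)) /\
  filterlim y1 (at_right 0) (locally (y1 0)) /\
  filterlim yb (at_right 0) (locally (yb 0)) /\
  y0 0 = nr / K /\ y1 0 = Rpower nr beta / K /\ yb 0 = Rpower nr beta / K.

(* The deterministic recurrence time zeta_n := inf {t > 0 : y1 t = n / K}
   (an extended real; +oo if the set is empty). *)
Definition zeta (k : R) (n : nat) (y1 : R -> R) : Rbar :=
  Glb_Rbar (fun t => 0 < t /\ y1 t = INR n / (k * INR n)).

(* The solution y0 = exp (lam0 t) / k decays, and as long as y0 + y1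
   stays small the growth rate phi of y1 is close to its maximum
   lambda1 = f 0 0 - d1.  Before time O(1) the seed contributes n^(beta-1) / k
   to y1 and the immigration n^(-alpha) y0 contributes a mass of order
   n^(-alpha); afterwards y1 grows like exp (lambda1 t).  So the level
   n / K = 1 / k is reached at time min (1 - beta, alpha) ln n / lambda1 + O(1).
   The lower bound on zeta_n comes from phi <= lambda1 through an integrating
   factor.  For the upper bound, once y0 <= (1 - 1/k) / 2 and while y1 < 1/k,
   (A5) gives phi >= lambda1 (k - 1) / (2 k), which makes a Lyapunov function
   nondecreasing and bounds the time spent below the level. *)

From Stdlib Require Import Reals Lra Lia Ranalysis5 Classical.
From Coquelicot Require Import Coquelicot.
Open Scope R_scope.

(* [auto_derive] leaves [Derive g x] with [g : R -> R], which does not match the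
   [R_AbsRing]-typed statement of [is_derive_unique] syntactically. *)
Ltac rewrite_Derive H :=
  match goal with |- context [Derive ?g ?x] => rewrite (is_derive_unique g x _ H) end.

Lemma exp_le x y : x <= y -> exp x <= exp y.
Proof. intros [H | ->]; [left; apply exp_increasing, H | right; reflexivity]. Qed.

Lemma is_derive_continuity_pt (h : R -> R) t l : is_derive h t l -> continuity_pt h t.
Proof.
intros H. apply continuity_pt_filterlim.
apply (ex_derive_continuous (K := R_AbsRing) (V := R_NormedModule)). now exists l.
Qed.

Lemma at_right_0_close (h : R -> R) v : filterlim h (at_right 0) (locally v) ->
  forall e, 0 < e -> exists d, 0 < d /\ forall t, 0 < t < d -> Rabs (h t - v) < e.
Proof.
intros Hh e He.
destruct (Hh (fun x => Rabs (x - v) < e)) as [d Hd].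
{ exists (mkposreal e He). intros x Hx. exact Hx. }
exists d. split; [apply cond_pos|]. intros t Ht. apply Hd; [|lra].
unfold ball; simpl; unfold AbsRing_ball, abs, minus, plus, opp; simpl.
rewrite Ropp_0, Rplus_0_r, Rabs_right; lra.
Qed.

Lemma continuity_pt_pos_nbhd (h : R -> R) m : continuity_pt h m -> 0 < h m ->
  exists e, 0 < e /\ forall s, Rabs (s - m) < e -> 0 < h s.
Proof.
intros Hc Hm. destruct (Hc (h m) Hm) as [e [He Hclose]].
exists e. split; [exact He|]. intros s Hs.
destruct (Req_dec s m) as [-> | Hsm]; [exact Hm|].
assert (Habs : Rabs (h s - h m) < h m).
{ apply Hclose. split; [split; [exact I | auto] | exact Hs]. }
apply Rabs_def2 in Habs. lra.
Qed.

Lemma derive_nonneg_le (h dh : R -> R) a b : a <= b ->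
  (forall t, a <= t <= b -> is_derive h t (dh t)) ->
  (forall t, a <= t <= b -> 0 <= dh t) -> h a <= h b.
Proof.
intros Hab Hd Hp.
destruct (MVT_gen h a b dh) as [c [Hc Heq]];
  rewrite ?Rmin_left, ?Rmax_right in * by lra.
- intros x Hx. apply Hd. lra.
- intros x Hx. apply (is_derive_continuity_pt _ _ (dh x)), Hd. lra.
- assert (0 <= dh c * (b - a)) by (apply Rmult_le_pos; [apply Hp|]; lra). lra.
Qed.

Lemma right_limit_le_of_derive_nonneg (h dh : R -> R) b v :
  filterlim h (at_right 0) (locally v) ->
  (forall t, 0 < t <= b -> is_derive h t (dh t)) ->
  (forall t, 0 < t <= b -> 0 <= dh t) ->
  forall t, 0 < t <= b -> v <= h t.
Proof.
intros Hlim Hd Hp t Ht.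
destruct (Rle_or_lt v (h t)) as [H | H]; [exact H|].
destruct (at_right_0_close h v Hlim (v - h t)) as [d [Hd0 Hclose]]; [lra|].
set (s := Rmin (d / 2) t).
assert (Hs : 0 < s <= t /\ s < d).
{ unfold s. split; [split; [apply Rmin_glb_lt; lra | apply Rmin_r]|].
  apply Rle_lt_trans with (d / 2); [apply Rmin_l | lra]. }
assert (h s <= h t).
{ apply (derive_nonneg_le h dh); [lra | intros x Hx; apply Hd; lra | intros x Hx; apply Hp; lra]. }
specialize (Hclose s ltac:(lra)). apply Rabs_def2 in Hclose. lra.
Qed.

Lemma integrating_factor_le (y E F dg : R -> R) b v :
  filterlim y (at_right 0) (locally v) -> ex_derive E 0 -> ex_derive F 0 ->
  (forall t, 0 < t <= b -> is_derive (fun x => y x * E x + F x) t (dg t)) ->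
  (forall t, 0 < t <= b -> 0 <= dg t) ->
  forall t, 0 < t <= b -> v * E 0 + F 0 <= y t * E t + F t.
Proof.
intros Hy HE HF Hd Hp.
apply (right_limit_le_of_derive_nonneg _ dg b); [|exact Hd | exact Hp].
assert (Hcont : forall G : R -> R, ex_derive G 0 -> filterlim G (at_right 0) (locally (G 0))).
{ intros G HG.
  eapply filterlim_filter_le_1;
    [|apply (ex_derive_continuous (K := R_AbsRing) (V := R_NormedModule)), HG].
  intros P HP. unfold at_right, within. apply filter_imp with (2 := HP). auto. }
eapply filterlim_comp_2 with (h := Rplus);
  [|apply Hcont, HF | apply (filterlim_plus (v * E 0) (F 0))].
eapply filterlim_comp_2 with (h := Rmult);
  [exact Hy | apply Hcont, HE | apply (filterlim_mult v (E 0))].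
Qed.

Lemma is_derive_neg_left (h : R -> R) t l : is_derive h t l -> 0 < l -> h t = 0 ->
  exists e, 0 < e /\ forall s, t - e < s < t -> h s < 0.
Proof.
intros Hd Hl H0. apply is_derive_Reals in Hd.
destruct (Hd (l / 2) ltac:(lra)) as [d Hdd].
exists d. split; [apply cond_pos|]. intros s Hs.
assert (Hq : Rabs (s - t) < d) by (rewrite Rabs_left; lra).
specialize (Hdd (s - t) ltac:(lra) Hq).
replace (t + (s - t)) with s in Hdd by ring. rewrite H0, Rminus_0_r in Hdd.
apply Rabs_def2 in Hdd.
assert (Hinv : / (s - t) < 0) by (apply Rinv_lt_0_compat; lra).
unfold Rdiv in Hdd. destruct (Rlt_or_le (h s) 0) as [A | A]; [exact A | nra].
Qed.

Lemma neg_left_of_nonpos (h : R -> R) m l : is_derive h m l -> (h m = 0 -> 0 < l) ->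
  h m <= 0 -> exists e, 0 < e /\ forall s, m - e < s < m -> h s < 0.
Proof.
intros Hd Hz Hm. destruct (Req_dec (h m) 0) as [H0 | Hneg].
- apply (is_derive_neg_left h m l); auto.
- destruct (continuity_pt_pos_nbhd (fun s => - h s) m) as [e [He Hneg']];
    [apply continuity_pt_opp, (is_derive_continuity_pt _ _ _ Hd) | lra |].
  exists e. split; [exact He|]. intros s Hs.
  assert (0 < - h s) by (apply Hneg'; rewrite Rabs_left; lra). lra.
Qed.

Lemma pos_of_derive_pos_at_zeros (h dh : R -> R) :
  (forall t, 0 < t -> is_derive h t (dh t)) ->
  (forall t, 0 < t -> h t = 0 -> 0 < dh t) ->
  (exists d, 0 < d /\ forall t, 0 < t < d -> 0 < h t) ->
  forall t, 0 < t -> 0 < h t.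
Proof.
intros Hd Hz [d [Hd0 Hpos]] t Ht.
destruct (Rlt_or_le 0 (h t)) as [A | A]; [exact A | exfalso].
assert (Hc : forall s, 0 < s -> continuity_pt h s)
  by (intros s Hs; exact (is_derive_continuity_pt _ _ _ (Hd s Hs))).
set (E := fun s => 0 < s <= t /\ forall r, 0 < r <= s -> 0 < h r).
set (s0 := Rmin (d / 2) t).
assert (Hs0 : 0 < s0 <= t /\ s0 < d).
{ unfold s0. split; [split; [apply Rmin_glb_lt; lra | apply Rmin_r]|].
  apply Rle_lt_trans with (d / 2); [apply Rmin_l | lra]. }
destruct (completeness E) as [m [Hub Hlub]].
{ exists t. intros x Hx. apply Hx. }
{ exists s0. split; [lra|]. intros r Hr. apply Hpos. lra. }
assert (Hm0 : s0 <= m) by (apply Hub; split; [lra | intros r Hr; apply Hpos; lra]).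
assert (Hmt : m <= t) by (apply Hlub; intros x Hx; apply Hx).
assert (Hbelow : forall r, 0 < r < m -> 0 < h r).
{ intros r Hr. destruct (Rlt_or_le 0 (h r)) as [B | B]; [exact B | exfalso].
  assert (Hb : is_upper_bound E r).
  { intros x [Hx1 Hx2]. destruct (Rle_or_lt x r) as [C | C]; [exact C|].
    specialize (Hx2 r ltac:(lra)). lra. }
  specialize (Hlub r Hb). lra. }
destruct (Rle_or_lt (h m) 0) as [Hm | Hm].
- destruct (neg_left_of_nonpos h m (dh m)) as [e [He Hneg]];
    [apply Hd; lra | apply Hz; lra | exact Hm |].
  set (r := Rmax (m / 2) (m - e / 2)).
  assert (Hr : 0 < r < m /\ m - e < r).
  { unfold r. pose proof (Rmax_l (m / 2) (m - e / 2)). pose proof (Rmax_r (m / 2) (m - e / 2)).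
    assert (Rmax (m / 2) (m - e / 2) < m) by (apply Rmax_lub_lt; lra). lra. }
  specialize (Hneg r ltac:(lra)). specialize (Hbelow r ltac:(lra)). lra.
- assert (Hmt' : m < t) by (destruct Hmt as [C | C]; [exact C | subst m; lra]).
  destruct (continuity_pt_pos_nbhd h m (Hc m ltac:(lra)) Hm) as [e [He Hnear]].
  set (m' := Rmin t (m + e / 2)).
  assert (Hm' : m < m' <= t /\ m' <= m + e / 2).
  { unfold m'. split; [split; [apply Rmin_glb_lt; lra | apply Rmin_l] | apply Rmin_r]. }
  assert (E m').
  { split; [lra|]. intros r Hr. destruct (Rlt_or_le r m) as [C | C]; [apply Hbelow; lra|].
    apply Hnear. rewrite Rabs_right; lra. }
  specialize (Hub m' ltac:(assumption)). lra.
Qed.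

Lemma IVT_hit (h : R -> R) s t c : s < t ->
  (forall x, s <= x <= t -> continuity_pt h x) -> h s < c -> c <= h t ->
  exists x, s <= x <= t /\ h x = c.
Proof.
intros Hst Hc H1 H2.
destruct (Req_dec (h t) c) as [E | E]; [exists t; split; [lra | exact E]|].
destruct (IVT_interv (fun x => h x - c) s t) as [z [Hz Hz2]]; [|lra..|].
- intros x Hx.
  apply continuity_pt_minus; [apply Hc, Hx | apply continuity_pt_const; now intros u v].
- exists z. split; [exact Hz | lra].
Qed.

Lemma linear_ode_solution (y : R -> R) (lam : R) :
  (forall t, 0 < t -> is_derive y t (lam * y t)) ->
  filterlim y (at_right 0) (locally (y 0)) ->
  forall t, 0 < t -> y t = y 0 * exp (lam * t).
Proof.
intros Hd Hlim t Ht.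
assert (Hmono : forall s, y 0 * (s * exp (- (lam * 0))) + 0 <= y t * (s * exp (- (lam * t))) + 0).
{ intros s.
  apply (integrating_factor_le y (fun x => s * exp (- (lam * x))) (fun _ => 0) (fun _ => 0) t);
    [exact Hlim | auto_derive; auto | auto_derive; auto | | intros; lra | lra].
  intros x Hx. auto_derive; [now exists (lam * y x); apply Hd; lra|].
  rewrite_Derive (Hd x ltac:(lra)). ring. }
assert (Hinv : y t * exp (- (lam * t)) = y 0).
{ pose proof (Hmono 1). pose proof (Hmono (-1)). rewrite Rmult_0_r, Ropp_0, exp_0 in *. lra. }
rewrite <- Hinv, Rmult_assoc, <- exp_plus. replace (- (lam * t) + lam * t) with 0 by ring.
rewrite exp_0. ring.
Qed.

Lemma exp_neg_factor_le x c s : x * exp (- s) <= c -> x <= c * exp s.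
Proof.
intros H. apply Rmult_le_compat_r with (r := exp s) in H; [|left; apply exp_pos].
rewrite Rmult_assoc, <- exp_plus, Rplus_opp_l, exp_0, Rmult_1_r in H. exact H.
Qed.

Lemma exp_neg_factor_ge x c s : c <= x * exp s -> c * exp (- s) <= x.
Proof.
intros H. apply Rmult_le_compat_r with (r := exp (- s)) in H; [|left; apply exp_pos].
rewrite Rmult_assoc, <- exp_plus, Rplus_opp_r, exp_0, Rmult_1_r in H. exact H.
Qed.

(* After [decay_time], [y0 <= (1 - 1/k) / 2]; at that time [y1] is at least
   [seed_factor * (a + eps)]; [hit_offset] collects the constants of the
   Lyapunov estimate. *)
Definition decay_time (k lam0 : R) : R := Rmax 1 (ln ((k - 1) / 2) / lam0).

Definition seed_factor (k lam0 d1 : R) : R :=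
  Rmin 1 (decay_time k lam0 * exp (lam0 * decay_time k lam0) / k)
  * exp (- (d1 * decay_time k lam0)).

Definition hit_offset (k lam0 d1 L : R) : R :=
  decay_time k lam0
  + (ln (1 / k) - ln (seed_factor k lam0 d1) - L / (k * lam0) + 2 / (k - 1)) / L.

Lemma seed_factor_pos k lam0 d1 : 0 < k -> 0 < seed_factor k lam0 d1.
Proof.
intros Hk. assert (Ht0 : 1 <= decay_time k lam0) by apply Rmax_l.
apply Rmult_lt_0_compat; [|apply exp_pos].
apply Rmin_glb_lt; [lra|]. apply Rdiv_lt_0_compat; [|exact Hk].
apply Rmult_lt_0_compat; [lra | apply exp_pos].
Qed.

Section Growth.

Variables (f : R -> R -> R) (d1 lam0 k a eps : R) (y0 y1 : R -> R).

Local Notation L := (f 0 0 - d1).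
Local Notation t0 := (decay_time k lam0).

Hypotheses (Hlam0 : lam0 < 0) (HL : 0 < L) (Hk : 1 < k) (Ha : 0 < a) (He : 0 < eps)
  (Hd1 : 0 < d1).
Hypothesis f_nonneg : forall x y, 0 <= x -> 0 <= y -> 0 <= f x y.
Hypothesis f_le_origin : forall x y, 0 <= x -> 0 <= y -> f x y <= f 0 0.
Hypothesis f_ge_linear : forall x y, 0 <= x -> 0 <= y -> f x y >= L * (1 - (x + y)) + d1.
Hypothesis y0_E : forall t, 0 < t -> y0 t = exp (lam0 * t) / k.
Hypothesis y1_derive :
  forall t, 0 < t -> is_derive y1 t ((f (y0 t) (y1 t) - d1) * y1 t + eps * y0 t).
Hypothesis y1_lim : filterlim y1 (at_right 0) (locally a).

Lemma y0_pos t : 0 < t -> 0 < y0 t.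
Proof. intros Ht. rewrite y0_E by exact Ht. apply Rdiv_lt_0_compat; [apply exp_pos | lra]. Qed.

Lemma y1_pos : forall t, 0 < t -> 0 < y1 t.
Proof.
apply (pos_of_derive_pos_at_zeros y1 _ y1_derive).
- intros s Hs Hz. rewrite Hz, Rmult_0_r, Rplus_0_l.
  apply Rmult_lt_0_compat; [exact He | apply y0_pos, Hs].
- destruct (at_right_0_close y1 a y1_lim a Ha) as [d [Hd Hclose]].
  exists d. split; [exact Hd|]. intros s Hs.
  specialize (Hclose s Hs). apply Rabs_def2 in Hclose. lra.
Qed.

Lemma growth_rate_le t : 0 < t -> f (y0 t) (y1 t) - d1 <= L.
Proof.
intros Ht.
assert (f (y0 t) (y1 t) <= f 0 0)
  by (apply f_le_origin; left; [apply y0_pos | apply y1_pos]; exact Ht).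
lra.
Qed.

Lemma y1_le_exp t : 0 < t -> y1 t <= (a + eps / (k * (L - lam0))) * exp (L * t).
Proof.
intros Ht. set (c2 := eps / (k * (L - lam0))).
assert (Hc2 : 0 < c2) by (apply Rdiv_lt_0_compat; [|apply Rmult_lt_0_compat]; lra).
assert (H : a * - exp (- (L * 0)) + - c2 * exp ((lam0 - L) * 0) <=
            y1 t * - exp (- (L * t)) + - c2 * exp ((lam0 - L) * t)).
{ apply (integrating_factor_le y1 (fun x => - exp (- (L * x)))
    (fun x => - c2 * exp ((lam0 - L) * x))
    (fun x => (L - (f (y0 x) (y1 x) - d1)) * y1 x * exp (- (L * x))) t);
    [exact y1_lim | auto_derive; auto | auto_derive; auto | | | lra].
  - intros x Hx. auto_derive; [eexists; apply y1_derive; lra|].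
    rewrite_Derive (y1_derive x ltac:(lra)). rewrite y0_E by lra.
    replace (exp ((lam0 - L) * x)) with (exp (lam0 * x) * exp (- (L * x)))
      by (rewrite <- exp_plus; f_equal; ring).
    unfold c2. field. split; lra.
  - intros x Hx. apply Rmult_le_pos; [apply Rmult_le_pos | left; apply exp_pos].
    + pose proof (growth_rate_le x ltac:(lra)). lra.
    + left. apply y1_pos. lra. }
rewrite !Rmult_0_r, Ropp_0, exp_0 in H.
assert (0 < c2 * exp ((lam0 - L) * t)) by (apply Rmult_lt_0_compat; [exact Hc2 | apply exp_pos]).
apply exp_neg_factor_le. lra.
Qed.

Lemma hit_time_ge t : 0 < t -> y1 t = 1 / k ->
  (ln (1 / k) - ln (a + eps / (k * (L - lam0)))) / L <= t.
Proof.
intros Ht Hy. pose proof (y1_le_exp t Ht) as U. rewrite Hy in U.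
assert (Hc : 0 < a + eps / (k * (L - lam0))).
{ assert (0 < eps / (k * (L - lam0))) by (apply Rdiv_lt_0_compat; [|apply Rmult_lt_0_compat]; lra).
  lra. }
apply ln_le in U; [|apply Rdiv_lt_0_compat; lra].
rewrite ln_mult, ln_exp in U; [|exact Hc | apply exp_pos].
apply Rle_div_l; lra.
Qed.

Lemma y0_le_after_decay t : t0 <= t -> y0 t <= (1 - 1 / k) / 2.
Proof.
intros Ht. unfold decay_time in Ht.
assert (H1 : ln ((k - 1) / 2) / lam0 <= t) by (eapply Rle_trans; [apply Rmax_r | exact Ht]).
assert (Ht1 : 1 <= t) by (eapply Rle_trans; [apply Rmax_l | exact Ht]).
assert (Hexp : exp (lam0 * t) <= (k - 1) / 2).
{ rewrite <- (exp_ln ((k - 1) / 2)) by lra. apply exp_le.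
  apply Rmult_le_compat_neg_l with (r := lam0) in H1; [|lra].
  replace (lam0 * (ln ((k - 1) / 2) / lam0)) with (ln ((k - 1) / 2)) in H1 by (field; lra).
  lra. }
rewrite y0_E by lra. replace ((1 - 1 / k) / 2) with ((k - 1) / 2 / k) by (field; lra).
unfold Rdiv at 1 3. apply Rmult_le_compat_r; [left; apply Rinv_0_lt_compat; lra | exact Hexp].
Qed.

Lemma y1_at_decay_time_ge : seed_factor k lam0 d1 * (a + eps) <= y1 t0.
Proof.
assert (Ht0 : 1 <= t0) by apply Rmax_l.
set (m0 := t0 * exp (lam0 * t0) / k).
assert (Hm0 : 0 < m0).
{ unfold m0. apply Rdiv_lt_0_compat; [apply Rmult_lt_0_compat; [lra | apply exp_pos] | lra]. }
(* On [0, t0] the immigration [eps * y0] is at least [eps * exp (lam0 * t0) / k]. *)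
assert (Hseed : a + eps * m0 <= y1 t0 * exp (d1 * t0)).
{ assert (H : a * exp (d1 * 0) + - (eps * exp (lam0 * t0) / k) * 0 <=
              y1 t0 * exp (d1 * t0) + - (eps * exp (lam0 * t0) / k) * t0).
  { apply (integrating_factor_le y1 (fun x => exp (d1 * x))
      (fun x => - (eps * exp (lam0 * t0) / k) * x)
      (fun x => f (y0 x) (y1 x) * y1 x * exp (d1 * x)
                + eps * (exp (lam0 * x) * exp (d1 * x) - exp (lam0 * t0)) / k) t0);
      [exact y1_lim | auto_derive; auto | auto_derive; auto | | | lra].
    - intros x Hx. auto_derive; [eexists; apply y1_derive; lra|].
      rewrite_Derive (y1_derive x ltac:(lra)). rewrite y0_E by lra. field. lra.
    - intros x Hx.
      pose proof (y0_pos x ltac:(lra)). pose proof (y1_pos x ltac:(lra)).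
      pose proof (f_nonneg (y0 x) (y1 x) ltac:(lra) ltac:(lra)).
      assert (exp (lam0 * t0) <= exp (lam0 * x)) by (apply exp_le; nra).
      assert (1 <= exp (d1 * x)) by (rewrite <- exp_0; apply exp_le; nra).
      pose proof (exp_pos (d1 * x)). pose proof (exp_pos (lam0 * x)).
      apply Rplus_le_le_0_compat; [apply Rmult_le_pos; nra|].
      apply Rdiv_le_0_compat; [apply Rmult_le_pos; nra | lra]. }
  rewrite !Rmult_0_r, exp_0 in H. unfold m0.
  replace (eps * (t0 * exp (lam0 * t0) / k)) with (eps * exp (lam0 * t0) / k * t0) by (field; lra).
  lra. }
unfold seed_factor. fold m0.
assert (Rmin 1 m0 * (a + eps) <= a + eps * m0)
  by (pose proof (Rmin_l 1 m0); pose proof (Rmin_r 1 m0); nra).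
apply Rle_trans with (Rmin 1 m0 * (a + eps) * exp (- (d1 * t0))); [right; ring|].
apply exp_neg_factor_ge. lra.
Qed.

(* Nondecreasing as long as [t0 <= t] and [y1 t < 1/k], since
   then the growth rate exceeds [L (k - 1) / (2 k)] by (A5). *)
Definition lyapunov (x : R) : R :=
  ln (y1 x) - L * x + L * exp (lam0 * x) / (k * lam0) + 2 * k / (k - 1) * y1 x.

Lemma lyapunov_le T : t0 <= T -> (forall x, t0 <= x <= T -> y1 x < 1 / k) ->
  lyapunov t0 <= lyapunov T.
Proof.
intros HT Hlow. assert (Ht0 : 1 <= t0) by apply Rmax_l.
set (phi := fun x => f (y0 x) (y1 x) - d1).
apply (derive_nonneg_le lyapunov (fun x => phi x + eps * y0 x / y1 x - L + L * y0 x
  + 2 * k / (k - 1) * (phi x * y1 x + eps * y0 x))); [exact HT | |].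
- intros x Hx. pose proof (y1_pos x ltac:(lra)). unfold lyapunov.
  auto_derive; [repeat split; auto; eexists; apply y1_derive; lra|].
  rewrite_Derive (y1_derive x ltac:(lra)). unfold phi. rewrite y0_E by lra.
  field. repeat split; lra.
- intros x Hx.
  pose proof (y0_pos x ltac:(lra)) as P0. pose proof (y1_pos x ltac:(lra)) as P1.
  pose proof (y0_le_after_decay x ltac:(lra)). pose proof (Hlow x Hx).
  pose proof (f_ge_linear (y0 x) (y1 x) ltac:(lra) ltac:(lra)).
  assert (Hphi : L * ((k - 1) / (2 * k)) <= phi x).
  { assert ((k - 1) / (2 * k) <= 1 - (y0 x + y1 x))
      by (replace ((k - 1) / (2 * k)) with ((1 - 1 / k) / 2) by (field; lra); lra).
    unfold phi. nra. }
  assert (0 <= eps * y0 x / y1 x) by (apply Rdiv_le_0_compat; nra).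
  assert (L * y1 x <= 2 * k / (k - 1) * (phi x * y1 x + eps * y0 x)).
  { replace (L * y1 x) with (2 * k / (k - 1) * (L * ((k - 1) / (2 * k)) * y1 x)) by (field; lra).
    apply Rmult_le_compat_l; [apply Rdiv_le_0_compat; lra | nra]. }
  unfold phi in *. nra.
Qed.

Lemma time_below_level_lt T : t0 <= T -> (forall x, t0 <= x <= T -> y1 x < 1 / k) ->
  T < hit_offset k lam0 d1 L - ln (a + eps) / L.
Proof.
intros HT Hlow. pose proof (lyapunov_le T HT Hlow) as Hly. unfold lyapunov in Hly.
assert (Ht0 : 1 <= t0) by apply Rmax_l.
pose proof (y1_pos t0 ltac:(lra)). pose proof (y1_pos T ltac:(lra)). pose proof (Hlow T ltac:(lra)).
assert (Hend : ln (y1 T) < ln (1 / k)) by (apply ln_increasing; lra).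
assert (Hstart : ln (seed_factor k lam0 d1) + ln (a + eps) <= ln (y1 t0)).
{ pose proof (seed_factor_pos k lam0 d1 ltac:(lra)).
  rewrite <- ln_mult by lra. apply ln_le; [nra | apply y1_at_decay_time_ge]. }
assert (Hdecay : L * exp (lam0 * T) / (k * lam0) - L * exp (lam0 * t0) / (k * lam0)
             <= - (L / (k * lam0))).
{ assert (Hq : L / (k * lam0) < 0).
  { apply Ropp_lt_cancel. rewrite Ropp_0, <- Rdiv_opp_r. apply Rdiv_lt_0_compat; nra. }
  assert (exp (lam0 * t0) <= 1) by (rewrite <- exp_0; apply exp_le; nra).
  pose proof (exp_pos (lam0 * T)).
  unfold Rdiv in *. nra. }
assert (Hlevel : 2 * k / (k - 1) * y1 T - 2 * k / (k - 1) * y1 t0 < 2 / (k - 1)).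
{ assert (2 * k / (k - 1) * y1 T < 2 * k / (k - 1) * (1 / k))
    by (apply Rmult_lt_compat_l; [apply Rdiv_lt_0_compat|]; lra).
  assert (0 < 2 * k / (k - 1) * y1 t0) by (apply Rmult_lt_0_compat; [apply Rdiv_lt_0_compat|]; lra).
  replace (2 * k / (k - 1) * (1 / k)) with (2 / (k - 1)) in * by (field; lra). lra. }
unfold hit_offset. apply (Rmult_lt_reg_l L); [exact HL|].
match goal with |- _ < L * (t0 + ?X / L - ?Y / L) =>
  replace (L * (t0 + X / L - Y / L)) with (L * t0 + X - Y) by (field; lra) end.
lra.
Qed.

Lemma hit_time_le : a < 1 / k ->
  exists t, 0 < t /\ y1 t = 1 / k /\
    t <= Rmax t0 (hit_offset k lam0 d1 L - ln (a + eps) / L).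
Proof.
intros Hak. set (T := Rmax t0 (hit_offset k lam0 d1 L - ln (a + eps) / L)).
assert (Ht0 : 1 <= t0) by apply Rmax_l.
assert (HT : t0 <= T) by apply Rmax_l.
assert (Hreach : exists t, t0 <= t <= T /\ 1 / k <= y1 t).
{ apply NNPP. intros Hnone.
  assert (Hlow : forall x, t0 <= x <= T -> y1 x < 1 / k).
  { intros x Hx. destruct (Rlt_or_le (y1 x) (1 / k)) as [A | A]; [exact A|].
    exfalso. apply Hnone. now exists x. }
  pose proof (time_below_level_lt T HT Hlow).
  assert (hit_offset k lam0 d1 L - ln (a + eps) / L <= T) by apply Rmax_r. lra. }
destruct Hreach as [t1 [Ht1 Hy1]].
destruct (at_right_0_close y1 a y1_lim (1 / k - a)) as [d [Hd Hclose]]; [lra|].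
set (s := Rmin (d / 2) (t1 / 2)).
assert (Hs : 0 < s /\ s < d /\ s < t1).
{ unfold s. split; [apply Rmin_glb_lt; lra|]. split.
  - apply Rle_lt_trans with (d / 2); [apply Rmin_l | lra].
  - apply Rle_lt_trans with (t1 / 2); [apply Rmin_r | lra]. }
assert (Hys : y1 s < 1 / k) by (specialize (Hclose s ltac:(lra)); apply Rabs_def2 in Hclose; lra).
destruct (IVT_hit y1 s t1 (1 / k)) as [x [Hx Hyx]]; [lra | | exact Hys | exact Hy1 |].
{ intros x Hx. apply (is_derive_continuity_pt _ _ _ (y1_derive x ltac:(lra))). }
exists x. repeat split; lra.
Qed.

End Growth.

Lemma Rpower_pos x y : 0 < Rpower x y.
Proof. apply exp_pos. Qed.

Lemma Rpower_div_self N k beta : 0 < N -> k <> 0 ->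
  Rpower N beta / (k * N) = 1 / k * Rpower N (- (1 - beta)).
Proof.
intros HN Hk. replace (- (1 - beta)) with (beta + - (1)) by ring.
rewrite Rpower_plus, Rpower_Ropp, Rpower_1 by exact HN. field. lra.
Qed.

Lemma ln_Rpower_sum_bounds p q u v N : 0 < p -> 0 < q -> 1 <= N ->
  ln (Rmin p q) - Rmin u v * ln N <= ln (p * Rpower N (- u) + q * Rpower N (- v)) <=
  ln (p + q) - Rmin u v * ln N.
Proof.
intros Hp Hq HN.
assert (Hlog : forall c w, 0 < c -> ln c - w * ln N = ln (c * Rpower N (- w))).
{ intros c w Hc. rewrite ln_mult, ln_Rpower by (try apply Rpower_pos; lra). ring. }
pose proof (Rpower_pos N (- u)). pose proof (Rpower_pos N (- v)).
pose proof (Rmin_l p q). pose proof (Rmin_r p q).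
assert (Hmin : 0 < Rmin p q) by (apply Rmin_glb_lt; lra).
rewrite !Hlog by lra.
destruct (Rle_or_lt u v) as [Huv | Huv];
  [rewrite (Rmin_left u v) by lra | rewrite (Rmin_right u v) by lra].
- assert (Rpower N (- v) <= Rpower N (- u)) by (apply Rle_Rpower; lra).
  split; apply ln_le; nra.
- assert (Rpower N (- u) <= Rpower N (- v)) by (apply Rle_Rpower; lra).
  split; apply ln_le; nra.
Qed.

Lemma Glb_Rbar_bounds (E : R -> Prop) (lo x : R) : E x -> (forall y, E y -> lo <= y) ->
  is_finite (Glb_Rbar E) /\ lo <= Glb_Rbar E <= x.
Proof.
intros Hx Hlo. destruct (Glb_Rbar_correct E) as [Hlb Hgr].
specialize (Hlb x Hx).
assert (Hg : Rbar_le lo (Glb_Rbar E)) by (apply Hgr; intros y Hy; apply Hlo, Hy).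
destruct (Glb_Rbar E) as [g | |]; simpl in *; try contradiction.
split; [reflexivity | lra].
Qed.

Lemma is_lim_seq_div_ln_of_bounds (u : nat -> R) (A Cl Cu : R) (N : nat) :
  (forall n, (N <= n)%nat -> A * ln (INR n) + Cl <= u n <= A * ln (INR n) + Cu) ->
  is_lim_seq (fun n => u n / ln (INR n)) A.
Proof.
intros Hu.
assert (Hlim : forall C, is_lim_seq (fun n => A + C / ln (INR n)) A).
{ intros C.
  assert (Hinv : is_lim_seq (fun n => C / ln (INR n)) 0).
  { replace 0 with (C * 0) by ring. unfold Rdiv.
    apply (is_lim_seq_scal_l _ C 0), (is_lim_seq_inv _ p_infty); [|discriminate].
    apply (is_lim_comp_seq _ _ p_infty p_infty);
      [apply is_lim_ln_p | exists 0%nat; discriminate | apply is_lim_seq_INR]. }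
  pose proof (is_lim_seq_plus' _ _ A 0 (is_lim_seq_const A) Hinv) as H.
  rewrite Rplus_0_r in H. exact H. }
apply is_lim_seq_le_le_loc with (u := fun n => A + Cl / ln (INR n))
  (w := fun n => A + Cu / ln (INR n)); [|apply Hlim..].
exists (max N 2). intros n Hn.
assert (HN : 2 <= INR n) by (pose proof (le_INR 2 n ltac:(lia)); simpl in *; lra).
assert (Hln : 0 < ln (INR n)) by (rewrite <- ln_1; apply ln_increasing; lra).
destruct (Hu n ltac:(lia)) as [Hlo Hhi]. split.
- apply Rle_div_r; [exact Hln|].
  replace ((A + Cl / ln (INR n)) * ln (INR n)) with (A * ln (INR n) + Cl) by (field; lra). lra.
- apply Rle_div_l; [exact Hln|].
  replace ((A + Cu / ln (INR n)) * ln (INR n)) with (A * ln (INR n) + Cu) by (field; lra). lra.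
Qed.

Lemma f_assumptions_le_origin f d1 : f_assumptions f d1 ->
  forall x y, 0 <= x -> 0 <= y -> f x y <= f 0 0.
Proof.
intros (_ & _ & _ & (Phi & Phi_mon & _ & Phi_E) & _) x y Hx Hy.
rewrite (Phi_E x y Hx Hy), (Phi_E 0 0), Rplus_0_r by lra. apply Phi_mon; lra.
Qed.

Section Recurrence.

Variables (r0 d0 d1 k alpha beta : R) (f : R -> R -> R) (y0 y1 yb : nat -> R -> R).

Local Notation L := (f 0 0 - d1).
Local Notation lam0 := (r0 - d0).

Hypotheses (Hl0 : lam0 < 0) (Hd1 : 0 < d1) (Hk : 1 < k) (Ha : 0 < alpha) (Hb : beta < 1).
Hypothesis Hf : f_assumptions f d1.
Hypothesis Hsol : forall n, (1 <= n)%nat ->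
  solves_system f r0 d0 d1 k alpha beta n (y0 n) (y1 n) (yb n).

(* With [N = n] the seed is [y1 0 = N^beta / (k N) = N^-(1-beta) / k] and the
   immigration rate is [N^-alpha]. *)
Lemma zeta_between n : (2 <= n)%nat ->
  is_finite (zeta k n (y1 n)) /\
  (ln (1 / k) - ln (1 / k * Rpower (INR n) (- (1 - beta))
                    + Rpower (INR n) (- alpha) / (k * (L - lam0)))) / L
    <= zeta k n (y1 n) <=
  Rmax (decay_time k lam0)
    (hit_offset k lam0 d1 L
     - ln (1 / k * Rpower (INR n) (- (1 - beta)) + Rpower (INR n) (- alpha)) / L).
Proof.
intros Hn.
assert (HN : 2 <= INR n) by (pose proof (le_INR 2 n Hn); simpl in *; lra).
pose proof Hf as (f_nonneg & _ & (Hr1 & _) & _ & _ & _ & f_ge_linear).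
assert (HL : 0 < L) by lra.
destruct (Hsol n ltac:(lia)) as (H0d & H1d & _ & H0l & H1l & _ & H00 & H10 & _).
cbv beta zeta in H0d, H1d.
set (a := 1 / k * Rpower (INR n) (- (1 - beta))).
set (eps := Rpower (INR n) (- alpha)).
assert (HNk : INR n / (k * INR n) = 1 / k) by (field; lra).
rewrite H10, Rpower_div_self in H1l by lra. fold a in H1l.
assert (Hy0 : forall t, 0 < t -> y0 n t = exp (lam0 * t) / k).
{ intros t Ht. rewrite (linear_ode_solution (y0 n) lam0 H0d H0l t Ht), H00, HNk. field. lra. }
assert (Ha0 : 0 < a) by (apply Rmult_lt_0_compat; [apply Rdiv_lt_0_compat | apply Rpower_pos]; lra).
assert (Hak : a < 1 / k).
{ assert (Hlt : Rpower (INR n) (- (1 - beta)) < Rpower (INR n) 0) by (apply Rpower_lt; lra).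
  rewrite Rpower_O in Hlt by lra.
  unfold a. assert (0 < 1 / k) by (apply Rdiv_lt_0_compat; lra). nra. }
assert (He : 0 < eps) by apply Rpower_pos.
edestruct (hit_time_le f d1 lam0 k a eps (y0 n) (y1 n)) as [t [Ht [Hyt Hle]]];
  try eassumption; try lra.
unfold zeta. rewrite HNk.
destruct (Glb_Rbar_bounds (fun t => 0 < t /\ y1 n t = 1 / k)
  ((ln (1 / k) - ln (a + eps / (k * (L - lam0)))) / L) t) as [Hfin Hbounds];
  [split; assumption | |split; [exact Hfin | lra]].
intros s [Hs Hys].
apply (hit_time_ge f d1 lam0 k a eps (y0 n) (y1 n)); try assumption; try lra.
apply f_assumptions_le_origin with (1 := Hf).
Qed.

Lemma zeta_log_bounds : exists Cl Cu, forall n, (2 <= n)%nat ->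
  is_finite (zeta k n (y1 n)) /\
  Rmin (1 - beta) alpha / L * ln (INR n) + Cl <= zeta k n (y1 n) <=
  Rmin (1 - beta) alpha / L * ln (INR n) + Cu.
Proof.
assert (HL : 0 < L) by (pose proof Hf as (_ & _ & (Hr1 & _) & _); lra).
set (m := Rmin (1 - beta) alpha).
set (c2 := 1 / (k * (L - lam0))).
assert (Hm : 0 < m) by (apply Rmin_glb_lt; lra).
assert (Hk0 : 0 < 1 / k) by (apply Rdiv_lt_0_compat; lra).
assert (Hc2 : 0 < c2) by (apply Rdiv_lt_0_compat; [|apply Rmult_lt_0_compat]; lra).
exists ((ln (1 / k) - ln (1 / k + c2)) / L).
exists (Rmax (decay_time k lam0) (hit_offset k lam0 d1 L - ln (Rmin (1 / k) 1) / L)).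
intros n Hn. destruct (zeta_between n Hn) as [Hfin [Hlo Hhi]].
assert (HN : 1 <= INR n) by (pose proof (le_INR 2 n Hn); simpl in *; lra).
assert (Hln : 0 <= ln (INR n)) by (rewrite <- ln_1; apply ln_le; lra).
destruct (ln_Rpower_sum_bounds (1 / k) c2 (1 - beta) alpha (INR n) Hk0 Hc2 HN) as [_ Hup].
destruct (ln_Rpower_sum_bounds (1 / k) 1 (1 - beta) alpha (INR n) Hk0 Rlt_0_1 HN) as [Hdown _].
fold m in Hup, Hdown. rewrite Rmult_1_l in Hdown.
replace (Rpower (INR n) (- alpha) / (k * (L - lam0))) with (c2 * Rpower (INR n) (- alpha))
  in Hlo by (unfold c2; field; lra).
assert (Hs : 0 <= m / L * ln (INR n)) by (apply Rmult_le_pos; [apply Rdiv_le_0_compat|]; lra).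
split; [exact Hfin | split].
- eapply Rle_trans; [|exact Hlo].
  replace (m / L * ln (INR n) + (ln (1 / k) - ln (1 / k + c2)) / L)
    with ((ln (1 / k) - (ln (1 / k + c2) - m * ln (INR n))) / L) by (field; lra).
  unfold Rdiv. apply Rmult_le_compat_r; [left; apply Rinv_0_lt_compat, HL | lra].
- eapply Rle_trans; [exact Hhi|].
  set (Y := 1 / k * Rpower (INR n) (- (1 - beta)) + Rpower (INR n) (- alpha)) in *.
  assert (HY : ln (Rmin (1 / k) 1) / L - m / L * ln (INR n) <= ln Y / L).
  { replace (ln (Rmin (1 / k) 1) / L - m / L * ln (INR n))
      with ((ln (Rmin (1 / k) 1) - m * ln (INR n)) / L) by (field; lra).
    unfold Rdiv. apply Rmult_le_compat_r; [left; apply Rinv_0_lt_compat, HL | lra]. }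
  pose proof (Rmax_l (decay_time k lam0) (hit_offset k lam0 d1 L - ln (Rmin (1 / k) 1) / L)).
  pose proof (Rmax_r (decay_time k lam0) (hit_offset k lam0 d1 L - ln (Rmin (1 / k) 1) / L)).
  apply Rmax_lub; lra.
Qed.

End Recurrence.

Theorem proposition3p1
  (r0 d0 d1 k alpha beta : R) (f : R -> R -> R)
  (y0 y1 yb : nat -> R -> R)
  (Hr0 : 0 <= r0) (Hd0 : 0 <= d0) (Hl0 : r0 - d0 < 0)
  (Hd1 : 0 < d1) (Hk : 1 < k)
  (Ha : 0 < alpha < 1) (Hb : 0 < beta < 1)
  (Hf : f_assumptions f d1)
  (Hsol : forall n : nat, (1 <= n)%nat ->
            solves_system f r0 d0 d1 k alpha beta n (y0 n) (y1 n) (yb n)) :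
  (exists N : nat, forall n : nat, (N <= n)%nat ->
      is_finite (zeta k n (y1 n))) /\
  is_lim_seq (fun n : nat => real (zeta k n (y1 n)) / ln (INR n))
    (Rmin (1 - beta) alpha / (f 0 0 - d1)).
Proof.
destruct (zeta_log_bounds r0 d0 d1 k alpha beta f y0 y1 yb) as [Cl [Cu Hbounds]];
  try assumption; try lra.
split.
- exists 2%nat. intros n Hn. apply Hbounds, Hn.
- apply (is_lim_seq_div_ln_of_bounds _ _ Cl Cu 2). intros n Hn. apply Hbounds, Hn.
Qed.
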